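(* Let $X$ be a finite-dimensional real Hilbert space and $A,B$ nonempty closed convex subsets of $X$ with $\operatorname{ri}A\cap\operatorname{ri}B\neq\varnothing$. Let $T=P_BR_A+\mathrm{Id}-P_A$. Then $T$ is boundedly linearly regular: for every $\rho>0$ there exists $\kappa\ge0$ such that $d_{\operatorname{Fix}T}(x)\le\kappa\|x-Tx\|$ for all $x\in X$ with $\|x\|\le\rho$.
   Context: $P_C$ denotes the metric projection onto a closed convex set $C$, $R_C=2P_C-\mathrm{Id}$ the reflector, $d_C$ the distance to $C$, $\operatorname{ri}$ the relative interior, and $\operatorname{Fix}T$ the fixed point set of $T$. *)

(* The finite-dimensional real Hilbert space X is
   modelled (up to isometric isomorphism) as R^n with the Euclidean inner product. *)
From Stdlib Require Import Reals ClassicalEpsilon.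
From mathcomp Require Import all_boot.
Set Implicit Arguments. Unset Strict Implicit. Unset Printing Implicit Defensive.
Open Scope R_scope.

Definition vec (n : nat) := 'I_n -> R.

Definition vadd n (x y : vec n) : vec n := fun i => x i + y i.
Definition vsub n (x y : vec n) : vec n := fun i => x i - y i.
Definition vscale n (t : R) (x : vec n) : vec n := fun i => t * x i.
Definition vzero n : vec n := fun _ => 0.

Definition inner n (x y : vec n) : R := \big[Rplus/0]_(i < n) (x i * y i).
Definition vnorm n (x : vec n) : R := sqrt (inner x x).

Definition closedS n (C : vec n -> Prop) : Prop :=
  forall x, (forall eps, 0 < eps -> exists y, C y /\ vnorm (vsub x y) < eps) -> C x.

Definition convexS n (C : vec n -> Prop) : Prop :=
  forall x y t, C x -> C y -> 0 <= t <= 1 ->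
    C (vadd (vscale t x) (vscale (1 - t) y)).

Definition affine_set n (S : vec n -> Prop) : Prop :=
  forall x y t, S x -> S y -> S (vadd (vscale t x) (vscale (1 - t) y)).

Definition aff n (C : vec n -> Prop) : vec n -> Prop :=
  fun y => forall S, affine_set S -> (forall z, C z -> S z) -> S y.

Definition ri n (C : vec n -> Prop) : vec n -> Prop :=
  fun x => C x /\ exists eps, 0 < eps /\
    forall y, aff C y -> vnorm (vsub y x) < eps -> C y.

Lemma vec_inhabited n : inhabited (vec n).
Proof. exact (inhabits (@vzero n)). Qed.

Lemma R_inhabited : inhabited R.
Proof. exact (inhabits 0). Qed.

(* metric projection: a nearest point of C (unique for nonempty closed convexS C) *)
Definition is_proj n (C : vec n -> Prop) (x p : vec n) : Prop :=
  C p /\ forall y, C y -> vnorm (vsub x p) <= vnorm (vsub x y).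

Definition proj n (C : vec n -> Prop) (x : vec n) : vec n :=
  epsilon (vec_inhabited n) (fun p => is_proj C x p).

Definition refl n (C : vec n -> Prop) (x : vec n) : vec n :=
  vsub (vscale 2 (proj C x)) x.

Definition dist_to n (C : vec n -> Prop) (x : vec n) : R :=
  epsilon R_inhabited (fun r =>
    (forall y, C y -> r <= vnorm (vsub x y)) /\
    (forall r', (forall y, C y -> r' <= vnorm (vsub x y)) -> r' <= r)).

Definition Fix n (T : vec n -> vec n) : vec n -> Prop := fun x => T x = x.

Definition DR n (A B : vec n -> Prop) (x : vec n) : vec n :=
  vsub (vadd (proj B (refl A x)) x) (proj A x).

(* Fix z in ri A /\ ri B: the points of aff A and aff B within some distance e of z lie in A
   and B.  For x, put a = P_A x, b = P_B (R_A x) and u = x - a; the residual x - T x is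
   d = a - b, which lies in the subspace L = (aff A - z) + (aff B - z).  Splitting d along the
   two directions with norms at most K |d| and pulling a towards z yields c in A /\ B with
   |c - a| = O(|d|).  The component g of u in L is O(|d|) too, by the normal cone inequalities
   of u at a and of d - u at b.  Finally u - g is orthogonal to A - c and B - c, so c + (u - g)
   is a fixed point of T, at distance |a - c + g| = O(|d|) from x; all constants depend only
   on |x - z| <= rho + |z|. *)

From HB Require Import structures.
From Stdlib Require Import Reals Lra Psatz ClassicalEpsilon FunctionalExtensionality Classical.
From mathcomp Require Import all_boot.
Open Scope R_scope.

Lemma RplusA : associative Rplus.
Proof. by move=> x y z; ring. Qed.
Lemma RplusC : commutative Rplus.
Proof. by move=> x y; ring. Qed.
Lemma Rplus0 : left_id 0 Rplus.
Proof. by move=> x; ring. Qed.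
HB.instance Definition _ := Monoid.isComLaw.Build R 0 Rplus RplusA RplusC Rplus0.

Section RealSums.
Variables (I : Type) (r : seq I) (P : pred I).

Lemma sumD (F G : I -> R) :
  \big[Rplus/0]_(i <- r | P i) F i + \big[Rplus/0]_(i <- r | P i) G i
  = \big[Rplus/0]_(i <- r | P i) (F i + G i).
Proof. by rewrite big_split. Qed.

Lemma sumZ (c : R) (F : I -> R) :
  c * \big[Rplus/0]_(i <- r | P i) F i = \big[Rplus/0]_(i <- r | P i) (c * F i).
Proof.
elim: r => [|a s IH]; rewrite ?big_nil ?big_cons; first ring.
by case: (P a); rewrite -IH; ring.
Qed.

Lemma sumZr (c : R) (F : I -> R) :
  \big[Rplus/0]_(i <- r | P i) F i * c = \big[Rplus/0]_(i <- r | P i) (F i * c).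
Proof. by rewrite Rmult_comm sumZ; apply: eq_bigr => i _; ring. Qed.

Lemma sumB (F G : I -> R) :
  \big[Rplus/0]_(i <- r | P i) F i - \big[Rplus/0]_(i <- r | P i) G i
  = \big[Rplus/0]_(i <- r | P i) (F i - G i).
Proof.
elim: r => [|a s IH]; rewrite ?big_nil ?big_cons; first ring.
by case: (P a); rewrite -IH; ring.
Qed.

Lemma sum_le (F G : I -> R) : (forall i, P i -> F i <= G i) ->
  \big[Rplus/0]_(i <- r | P i) F i <= \big[Rplus/0]_(i <- r | P i) G i.
Proof.
move=> H; elim: r => [|a s IH]; rewrite ?big_nil ?big_cons; first lra.
by case E: (P a) => //; have := H a E; lra.
Qed.

Lemma sum_ge0 (F : I -> R) : (forall i, P i -> 0 <= F i) ->
  0 <= \big[Rplus/0]_(i <- r | P i) F i.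
Proof.
by move=> H; have := @sum_le (fun _ => 0) F H; rewrite big1.
Qed.
End RealSums.

Lemma sum_const n (c : R) : \big[Rplus/0]_(i < n) c = INR n * c.
Proof.
elim: n => [|n IH]; first by rewrite big_ord0 Rmult_0_l.
by rewrite (big_ord_recr n (fun _ => c)) IH S_INR /=; ring.
Qed.

Lemma sum_delta n (j : 'I_n) (F : 'I_n -> R) :
  \big[Rplus/0]_(i < n) (if i == j then F i else 0) = F j.
Proof.
rewrite (bigD1 j) //= eqxx big1; first ring.
by move=> i /negbTE ->.
Qed.

Lemma sum_term_le n (j : 'I_n) (F : 'I_n -> R) : (forall i, 0 <= F i) ->
  F j <= \big[Rplus/0]_(i < n) F i.
Proof.
move=> H; rewrite (bigD1 j) //= -[X in X <= _]Rplus_0_r.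
by apply: Rplus_le_compat_l; apply: sum_ge0.
Qed.

Ltac vext := apply: functional_extensionality => ?;
  rewrite /vadd /vsub /vscale /vzero /=; first [ring | field].
Ltac inner_ring := rewrite /inner ?(sumZ, sumZr, sumD, sumB);
  apply: eq_bigr => ? _; rewrite /vadd /vsub /vscale /vzero /=; first [ring | field].

Section Euclidean.
Context {n : nat}.
Implicit Types x y w : vec n.

Lemma inner_sym x y : inner x y = inner y x.
Proof. by rewrite /inner; apply: eq_bigr => i _; ring. Qed.
Lemma inner_addl x y w : inner (vadd x y) w = inner x w + inner y w.
Proof. by rewrite /inner sumD; apply: eq_bigr => i _; rewrite /vadd; ring. Qed.
Lemma inner_addr x y w : inner w (vadd x y) = inner w x + inner w y.
Proof. by rewrite /inner sumD; apply: eq_bigr => i _; rewrite /vadd; ring. Qed.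
Lemma inner_subl x y w : inner (vsub x y) w = inner x w - inner y w.
Proof. by rewrite /inner sumB; apply: eq_bigr => i _; rewrite /vsub; ring. Qed.
Lemma inner_subr x y w : inner w (vsub x y) = inner w x - inner w y.
Proof. by rewrite /inner sumB; apply: eq_bigr => i _; rewrite /vsub; ring. Qed.
Lemma inner_scalel c x w : inner (vscale c x) w = c * inner x w.
Proof. by rewrite /inner sumZ; apply: eq_bigr => i _; rewrite /vscale; ring. Qed.
Lemma inner_scaler c x w : inner w (vscale c x) = c * inner w x.
Proof. by rewrite /inner sumZ; apply: eq_bigr => i _; rewrite /vscale; ring. Qed.
Lemma inner_zerol w : inner (@vzero n) w = 0.
Proof. by rewrite /inner big1 // => i _; rewrite /vzero; ring. Qed.
Lemma inner_zeror w : inner w (@vzero n) = 0.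
Proof. by rewrite inner_sym inner_zerol. Qed.

Definition innerE := (inner_addl, inner_addr, inner_subl, inner_subr, inner_scalel,
  inner_scaler, inner_zerol, inner_zeror).

Lemma inner_ge0 x : 0 <= inner x x.
Proof. by apply: sum_ge0 => i _; nra. Qed.

Lemma inner_coord_le x i : x i * x i <= inner x x.
Proof. by apply: (@sum_term_le n i (fun j => x j * x j)) => j; nra. Qed.

Lemma inner_eq0 x : inner x x = 0 -> x = @vzero n.
Proof.
move=> H; apply: functional_extensionality => i; rewrite /vzero.
by have := inner_coord_le x i; nra.
Qed.

Lemma vnorm_ge0 x : 0 <= vnorm x.
Proof. exact: sqrt_pos. Qed.

Lemma vnorm_sq x : vnorm x * vnorm x = inner x x.
Proof. exact: sqrt_sqrt (inner_ge0 x). Qed.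

Lemma vnorm_le_sq x y : inner x x <= inner y y -> vnorm x <= vnorm y.
Proof.
by have := vnorm_sq x; have := vnorm_sq y; have := vnorm_ge0 x; have := vnorm_ge0 y; nra.
Qed.

Lemma sq_le_vnorm x y : vnorm x <= vnorm y -> inner x x <= inner y y.
Proof. by move=> H; rewrite -!vnorm_sq; have := vnorm_ge0 x; nra. Qed.

Lemma vnorm_le x r : 0 <= r -> inner x x <= r * r -> vnorm x <= r.
Proof. by move=> Hr H; have := vnorm_sq x; have := vnorm_ge0 x; nra. Qed.

Lemma vnorm_eq0 x : vnorm x = 0 -> x = @vzero n.
Proof. by move=> H; apply: inner_eq0; rewrite -vnorm_sq H; ring. Qed.

Lemma vnorm_zero : vnorm (@vzero n) = 0.
Proof. by rewrite /vnorm inner_zerol sqrt_0. Qed.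

Lemma vnorm_scale c x : vnorm (vscale c x) = Rabs c * vnorm x.
Proof.
rewrite /vnorm inner_scalel inner_scaler -Rmult_assoc sqrt_mult_alt; last by nra.
by rewrite -Rsqr_def sqrt_Rsqr_abs.
Qed.

Lemma vnorm_opp x : vnorm (vscale (-1) x) = vnorm x.
Proof. by rewrite vnorm_scale Rabs_Ropp Rabs_R1 Rmult_1_l. Qed.

Lemma vnorm_sym x y : vnorm (vsub x y) = vnorm (vsub y x).
Proof. by rewrite /vnorm; f_equal; rewrite !innerE; ring. Qed.

Lemma vnorm_coord x i : Rabs (x i) <= vnorm x.
Proof.
have := inner_coord_le x i; have := vnorm_sq x; have := vnorm_ge0 x.
by case: (Rcase_abs (x i)) => H; [rewrite Rabs_left // | rewrite Rabs_right //]; nra.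
Qed.

Lemma cauchy_schwarz x y : inner x y <= vnorm x * vnorm y.
Proof.
suff H : inner x y * inner x y <= inner x x * inner y y.
  rewrite -vnorm_sq -(vnorm_sq y) in H.
  have := Rmult_le_pos _ _ (vnorm_ge0 x) (vnorm_ge0 y); nra.
case: (Req_dec (inner y y) 0) => Hyy.
  by rewrite (inner_eq0 y Hyy) !inner_zeror; nra.
have Hyp : 0 < inner y y by have := inner_ge0 y; lra.
(* Expand [0 <= |x - t y|^2] at the minimizing [t]. *)
set t := inner x y / inner y y.
have := inner_ge0 (vsub x (vscale t y)).
rewrite !innerE (inner_sym y x).
have -> : inner x y = t * inner y y by rewrite /t; field; lra.
nra.
Qed.

Lemma cauchy_schwarz_abs x y : Rabs (inner x y) <= vnorm x * vnorm y.
Proof.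
apply: Rabs_le; split; last exact: cauchy_schwarz.
have := cauchy_schwarz (vscale (-1) x) y.
by rewrite inner_scalel vnorm_opp; lra.
Qed.

Lemma vnorm_add x y : vnorm (vadd x y) <= vnorm x + vnorm y.
Proof.
apply: vnorm_le; first by have := vnorm_ge0 x; have := vnorm_ge0 y; lra.
have := cauchy_schwarz x y; rewrite !innerE (inner_sym y x) -!vnorm_sq; nra.
Qed.

Lemma vnorm_sub x y : vnorm (vsub x y) <= vnorm x + vnorm y.
Proof.
have -> : vsub x y = vadd x (vscale (-1) y) by vext.
by rewrite -(vnorm_opp y); apply: vnorm_add.
Qed.

Lemma vnorm_sub_triangle x y w : vnorm (vsub x w) <= vnorm (vsub x y) + vnorm (vsub y w).
Proof.
have -> : vsub x w = vadd (vsub x y) (vsub y w) by vext.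
exact: vnorm_add.
Qed.
End Euclidean.

Section Projection.
Context {n : nat}.
Implicit Types (x y p q : vec n) (C : vec n -> Prop).

Definition normal C a w := forall y, C y -> inner w (vsub y a) <= 0.

Lemma normal_inner_ge0 C a w y : normal C a w -> C y -> 0 <= inner w (vsub a y).
Proof. by move=> Hn Cy; have := Hn y Cy; rewrite !innerE; lra. Qed.

Lemma orth_normal C a w : (forall y, C y -> inner w (vsub y a) = 0) ->
  normal C a w /\ normal C a (vscale (-1) w).
Proof. by move=> w0; split=> y Cy; rewrite ?inner_scalel w0 //; lra. Qed.

Lemma is_proj_normal C x p : convexS C -> is_proj C x p -> normal C p (vsub x p).
Proof.
move=> Ccv [Cp p_min] y Cy.
set g := inner (vsub x p) (vsub y p); set h := inner (vsub y p) (vsub y p).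
have hh0 : 0 <= h := inner_ge0 _.
have step : forall t, 0 < t <= 1 -> 2 * g <= t * h.
  move=> t [t0 t1].
  have := sq_le_vnorm _ _ (p_min _ (Ccv _ _ t Cy Cp (conj (Rlt_le _ _ t0) t1))).
  have -> : vsub x (vadd (vscale t y) (vscale (1 - t) p)) =
            vsub (vsub x p) (vscale t (vsub y p)) by vext.
  have -> : inner (vsub (vsub x p) (vscale t (vsub y p))) (vsub (vsub x p) (vscale t (vsub y p)))
    = inner (vsub x p) (vsub x p) - 2 * t * g + t * t * h by rewrite /g /h; inner_ring.
  nra.
apply: Rmult_le_reg_l (Rlt_0_2) _; rewrite Rmult_0_r.
apply: le_epsilon => eps eps0; rewrite Rplus_0_l.
set t := Rmin 1 (eps / (h + 1)).
have t0 : 0 < t by apply: Rmin_glb_lt; [lra | apply: Rdiv_lt_0_compat; lra].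
have th : t * h <= eps.
  have : t * (h + 1) <= eps.
    apply: Rle_trans (Rmult_le_compat_r _ _ _ _ (Rmin_r 1 (eps / (h + 1)))) _; first lra.
    by rewrite /Rdiv Rmult_assoc Rinv_l; lra.
  nra.
by have := step t (conj t0 (Rmin_l _ _)); lra.
Qed.

Lemma normal_is_proj C x p : C p -> normal C p (vsub x p) -> is_proj C x p.
Proof.
move=> Cp Hn; split => // y Cy; apply: vnorm_le_sq.
have -> : inner (vsub x y) (vsub x y) = inner (vsub x p) (vsub x p)
   - 2 * inner (vsub x p) (vsub y p) + inner (vsub y p) (vsub y p) by inner_ring.
by have := Hn y Cy; have := inner_ge0 (vsub y p); lra.
Qed.

Lemma is_proj_unique C x p q : convexS C -> is_proj C x p -> is_proj C x q -> p = q.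
Proof.
move=> Ccv Hp Hq.
have h1 := is_proj_normal _ _ _ Ccv Hp _ (proj1 Hq).
have h2 := is_proj_normal _ _ _ Ccv Hq _ (proj1 Hp).
have : inner (vsub x p) (vsub q p) =
  inner (vsub p q) (vsub p q) - inner (vsub x q) (vsub p q) by inner_ring.
move=> h3; have E : inner (vsub p q) (vsub p q) = 0 by have := inner_ge0 (vsub p q); lra.
apply: functional_extensionality => i.
by have := f_equal (fun f => f i) (inner_eq0 _ E); rewrite /vsub /vzero; lra.
Qed.

Lemma proj_eq C x p : convexS C -> is_proj C x p -> proj C x = p.
Proof.
move=> Ccv Hp; apply: (is_proj_unique _ _ _ _ Ccv _ Hp).
by rewrite /proj; apply: epsilon_spec; exists p.
Qed.

Lemma proj_eq_normal C x p : convexS C -> C p -> normal C p (vsub x p) -> proj C x = p.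
Proof. by move=> Ccv Cp Hn; apply: proj_eq => //; apply: normal_is_proj. Qed.

Lemma is_proj_dist_le C x p y : convexS C -> is_proj C x p -> C y ->
  vnorm (vsub p y) <= vnorm (vsub x y).
Proof.
move=> Ccv Hp Cy; have Hn := is_proj_normal _ _ _ Ccv Hp _ Cy; apply: vnorm_le_sq.
have -> : inner (vsub x y) (vsub x y) = inner (vsub x p) (vsub x p)
   - 2 * inner (vsub x p) (vsub y p) + inner (vsub p y) (vsub p y) by inner_ring.
by have := inner_ge0 (vsub x p); lra.
Qed.

Lemma dist_to_le (F : vec n -> Prop) x f : F f -> dist_to F x <= vnorm (vsub x f).
Proof.
move=> Ff.
pose E r := forall y, F y -> r <= vnorm (vsub x y).
have bE : bound E by exists (vnorm (vsub x f)) => r Er; exact: Er.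
have neE : exists r, E r by exists 0 => y _; exact: vnorm_ge0.
have [m [m_ub m_lub]] := completeness E bE neE.
have glb : exists r, E r /\ forall r', E r' -> r' <= r.
  exists m; split; last exact: m_ub.
  by move=> y Fy; apply: m_lub => r Er; exact: Er.
by have [+ _] := epsilon_spec R_inhabited _ glb; apply.
Qed.
End Projection.

Definition inv_succ (k : nat) : R := / (INR k + 1).

Lemma inv_succ_pos k : 0 < inv_succ k.
Proof. by rewrite /inv_succ; apply: Rinv_0_lt_compat; have := pos_INR k; lra. Qed.

Lemma inv_succ_small c eps : 0 <= c -> 0 < eps ->
  exists N, forall k, (N <= k)%coq_nat -> c * inv_succ k < eps.
Proof.
move=> c0 eps0; have [N HN] := INR_archimed eps (c + 1) eps0.
exists N => k Hk; have := le_INR _ _ Hk; have := pos_INR N => N0 kN.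
have k1 : 0 < INR k + 1 by lra.
apply: (Rmult_lt_reg_r (INR k + 1)) => //.
rewrite /inv_succ Rmult_assoc Rinv_l; nra.
Qed.

Section Completeness.
Context {n : nat}.

Lemma vec_cauchy_limit (ys : nat -> vec n) :
  (forall k m, vnorm (vsub (ys k) (ys m)) <= inv_succ k + inv_succ m) ->
  exists y, forall k, vnorm (vsub y (ys k)) <= (INR n + 1) * inv_succ k.
Proof.
move=> ys_cauchy.
have coord_cauchy k m i : Rabs (ys k i - ys m i) <= inv_succ k + inv_succ m.
  exact: Rle_trans (vnorm_coord (vsub (ys k) (ys m)) i) (ys_cauchy k m).
have crit i : Cauchy_crit (fun k => ys k i).
  move=> eps eps0; have [N HN] := inv_succ_small 1 (eps / 2) Rle_0_1 ltac:(lra).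
  exists N => k m Hk Hm; rewrite /R_dist.
  by have := coord_cauchy k m i; have := HN k Hk; have := HN m Hm; lra.
pose y i := proj1_sig (R_complete _ (crit i)).
have y_lim i : Un_cv (fun k => ys k i) (y i) := proj2_sig (R_complete _ (crit i)).
have y_coord k i : Rabs (y i - ys k i) <= inv_succ k.
  apply: le_epsilon => eps eps0.
  have [N1 HN1] := y_lim i (eps / 2) ltac:(lra).
  have [N2 HN2] := inv_succ_small 1 (eps / 2) Rle_0_1 ltac:(lra).
  have h1 := HN1 _ (Nat.le_max_l N1 N2); have h2 := HN2 _ (Nat.le_max_r N1 N2).
  have h3 := coord_cauchy (Nat.max N1 N2) k i; rewrite /R_dist in h1.
  have := Rabs_triang (y i - ys (Nat.max N1 N2) i) (ys (Nat.max N1 N2) i - ys k i).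
  rewrite -Rabs_Ropp Ropp_minus_distr in h1.
  by rewrite (_ : y i - _ + (_ - ys k i) = y i - ys k i); [lra | ring].
exists y => k; have i0 := inv_succ_pos k.
apply: vnorm_le; first by have := pos_INR n; nra.
apply: Rle_trans (_ : INR n * (inv_succ k * inv_succ k) <= _); last first.
  by have := pos_INR n; nra.
rewrite /inner -sum_const; apply: sum_le => i _; rewrite /vsub.
apply: Rsqr_le_abs_1; rewrite (Rabs_pos_eq (inv_succ k)); last lra.
exact: y_coord.
Qed.

Lemma sq_dist_inf (C : vec n -> Prop) x : (exists c, C c) ->
  exists D2, (forall y, C y -> D2 <= inner (vsub x y) (vsub x y)) /\
    forall eta, 0 < eta -> exists y, C y /\ inner (vsub x y) (vsub x y) < D2 + eta.
Proof.
move=> [c Cc].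
pose E r := exists y, C y /\ r = - inner (vsub x y) (vsub x y).
have bE : bound E by exists 0 => r [y [_ ->]]; have := inner_ge0 (vsub x y); lra.
have neE : exists r, E r by exists (- inner (vsub x c) (vsub x c)), c.
have [m [m_ub m_lub]] := completeness E bE neE.
exists (- m); split.
  by move=> y Cy; have := m_ub _ (ex_intro _ y (conj Cy erefl)); lra.
move=> eta eta0; apply: NNPP => Hn.
suff : m <= m - eta by lra.
apply: m_lub => r [y [Cy ->]]; apply: Rnot_lt_le => Hlt; apply: Hn.
by exists y; split => //; lra.
Qed.

(* Parallelogram law at the midpoint, which lies in [C]. *)
Lemma near_minimizers_close (C : vec n -> Prop) x D2 y y' alpha beta :
  convexS C -> (forall w, C w -> D2 <= inner (vsub x w) (vsub x w)) ->
  C y -> C y' -> 0 <= alpha -> 0 <= beta ->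
  inner (vsub x y) (vsub x y) <= D2 + alpha * alpha ->
  inner (vsub x y') (vsub x y') <= D2 + beta * beta ->
  vnorm (vsub y y') <= 2 * (alpha + beta).
Proof.
move=> Ccv D2_low Cy Cy' alpha0 beta0 hy hy'.
set m := vadd (vscale (1/2) y) (vscale (1 - 1/2) y').
have hm := D2_low m (Ccv _ _ (1/2) Cy Cy' ltac:(lra)).
apply: vnorm_le; first lra.
have -> : inner (vsub y y') (vsub y y') =
  2 * inner (vsub x y) (vsub x y) + 2 * inner (vsub x y') (vsub x y')
  - 4 * inner (vsub x m) (vsub x m) by rewrite /m; inner_ring.
nra.
Qed.

Lemma proj_exists (C : vec n -> Prop) x : closedS C -> convexS C -> (exists c, C c) ->
  exists p, is_proj C x p.
Proof.
move=> Ccl Ccv Cne; have [D2 [D2_low D2_inf]] := sq_dist_inf C x Cne.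
have near k : {y | C y /\ inner (vsub x y) (vsub x y) < D2 + inv_succ k / 2 * (inv_succ k / 2)}.
  by apply: constructive_indefinite_description; apply: D2_inf; have := inv_succ_pos k; nra.
pose ys k := proj1_sig (near k).
have ys_C k : C (ys k) := proj1 (proj2_sig (near k)).
have ys_near k : inner (vsub x (ys k)) (vsub x (ys k)) < D2 + inv_succ k / 2 * (inv_succ k / 2)
  := proj2 (proj2_sig (near k)).
have ys_close k m : vnorm (vsub (ys k) (ys m)) <= inv_succ k + inv_succ m.
  have := inv_succ_pos k; have := inv_succ_pos m => m0 k0.
  have := near_minimizers_close C x D2 _ _ (inv_succ k / 2) (inv_succ m / 2) Ccv D2_low
    (ys_C k) (ys_C m) ltac:(lra) ltac:(lra) (Rlt_le _ _ (ys_near k)) (Rlt_le _ _ (ys_near m)).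
  lra.
have [y y_lim] := vec_cauchy_limit _ ys_close.
have Cy : C y.
  apply: Ccl => eps eps0.
  have [N HN] := inv_succ_small (INR n + 1) eps ltac:(have := pos_INR n; lra) eps0.
  by exists (ys N); split => //; have := y_lim N; have := HN N (le_n N); lra.
exists y; split => // w Cw.
apply: le_epsilon => eps eps0.
have [N HN] := inv_succ_small (INR n + 2) eps ltac:(have := pos_INR n; lra) eps0.
have i0 := inv_succ_pos N.
have ys_le : vnorm (vsub x (ys N)) <= vnorm (vsub x w) + inv_succ N / 2.
  apply: vnorm_le; first by have := vnorm_ge0 (vsub x w); lra.
  have := ys_near N; have := D2_low w Cw; rewrite -(vnorm_sq (vsub x w)).
  have := Rmult_le_pos _ _ (vnorm_ge0 (vsub x w)) (Rlt_le _ _ i0); nra.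
have := vnorm_sub_triangle x (ys N) y; rewrite (vnorm_sym (ys N) y).
by have := y_lim N; have := HN N (le_n N); lra.
Qed.
End Completeness.

Section OrthonormalBases.
Context {n : nat}.
Implicit Types (x y u s : vec n) (S : vec n -> Prop).

Definition subspace S := S (@vzero n) /\ (forall x y, S x -> S y -> S (vadd x y)) /\
  (forall c x, S x -> S (vscale c x)).

Definition orthonormal k (E : 'I_k -> vec n) :=
  forall i j, inner (E i) (E j) = if i == j then 1 else 0.

Definition lin_comb {k} (c : 'I_k -> R) (E : 'I_k -> vec n) : vec n :=
  fun l => \big[Rplus/0]_(j < k) (c j * E j l).

Definition coord_proj {k} (E : 'I_k -> vec n) u : vec n := lin_comb (fun j => inner u (E j)) E.

Lemma lin_comb_recl k c E : @lin_comb k.+1 c E =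
  vadd (vscale (c ord0) (E ord0)) (lin_comb (fun j => c (lift ord0 j)) (fun j => E (lift ord0 j))).
Proof. by apply: functional_extensionality => l; rewrite /lin_comb big_ord_recl. Qed.

Lemma lin_comb0 c E : @lin_comb 0 c E = @vzero n.
Proof. by apply: functional_extensionality => l; rewrite /lin_comb big_ord0. Qed.

Lemma inner_lin_combl k c E y :
  inner (@lin_comb k c E) y = \big[Rplus/0]_(j < k) (c j * inner (E j) y).
Proof.
rewrite {1}/inner /lin_comb.
under eq_bigr => i _ do rewrite sumZr.
rewrite exchange_big /=; apply: eq_bigr => j _.
by rewrite /inner sumZ; apply: eq_bigr => i _; ring.
Qed.

Lemma subspace_lin_comb S k c E : subspace S -> (forall j, S (E j)) -> S (@lin_comb k c E).
Proof.
move=> [S0 [Sadd Sscale]]; elim: k c E => [|k IH] c E SE; first by rewrite lin_comb0.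
by rewrite lin_comb_recl; apply: Sadd; [apply: Sscale | apply: IH].
Qed.

Lemma vnorm_lin_comb_le k c E M : (forall j, Rabs (c j) <= M) ->
  vnorm (@lin_comb k c E) <= M * \big[Rplus/0]_(j < k) vnorm (E j).
Proof.
elim: k c E => [|k IH] c E cM.
  by rewrite lin_comb0 vnorm_zero big_ord0; lra.
rewrite lin_comb_recl big_ord_recl Rmult_plus_distr_l.
apply: Rle_trans (vnorm_add _ _) (Rplus_le_compat _ _ _ _ _ (IH _ _ (fun j => cM _))).
by rewrite vnorm_scale; apply: Rmult_le_compat_r; [apply: vnorm_ge0 | apply: cM].
Qed.

Lemma inner_coord_proj k E u j : @orthonormal k E ->
  inner (E j) (coord_proj E u) = inner u (E j).
Proof.
move=> HE; rewrite inner_sym inner_lin_combl.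
rewrite (eq_bigr (fun i => if i == j then inner u (E i) else 0)); first by rewrite sum_delta.
by move=> i _; rewrite HE; case: (i == j); ring.
Qed.

Lemma bessel k E x : @orthonormal k E ->
  \big[Rplus/0]_(j < k) (inner x (E j) * inner x (E j)) <= inner x x.
Proof.
move=> HE; have := inner_ge0 (vsub x (coord_proj E x)).
set sq := \big[Rplus/0]_(j < k) (inner x (E j) * inner x (E j)).
have h1 : inner (coord_proj E x) x = sq.
  by rewrite inner_lin_combl; apply: eq_bigr => j _; rewrite inner_sym.
have h2 : inner (coord_proj E x) (coord_proj E x) = sq.
  by rewrite {1}/coord_proj inner_lin_combl; apply: eq_bigr => j _; rewrite inner_coord_proj.
by rewrite !innerE (inner_sym x) h1 h2; lra.
Qed.

Definition unit_vec (i : 'I_n) : vec n := fun l => if l == i then 1 else 0.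

Lemma inner_unit_vec i x : inner (unit_vec i) x = x i.
Proof.
rewrite /inner (eq_bigr (fun l => if l == i then x l else 0)); first by rewrite sum_delta.
by move=> l _; rewrite /unit_vec; case: (l == i); ring.
Qed.

(* Summing Bessel's inequality over the standard basis gives [k <= n]. *)
Lemma orthonormal_card_le k E : @orthonormal k E -> (k <= n)%N.
Proof.
move=> HE; apply/leP; apply: INR_le.
have -> : INR k = \big[Rplus/0]_(j < k) inner (E j) (E j).
  by rewrite (eq_bigr (fun _ => 1)) ?sum_const ?Rmult_1_r // => j _; rewrite HE eqxx.
have -> : INR n = \big[Rplus/0]_(i < n) inner (unit_vec i) (unit_vec i).
  rewrite (eq_bigr (fun _ => 1)) ?sum_const ?Rmult_1_r // => i _.
  by rewrite inner_unit_vec /unit_vec eqxx.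
have -> : \big[Rplus/0]_(j < k) inner (E j) (E j) = \big[Rplus/0]_(i < n) \big[Rplus/0]_(j < k)
   (inner (unit_vec i) (E j) * inner (unit_vec i) (E j)).
  rewrite exchange_big /=; apply: eq_bigr => j _; apply: eq_bigr => i _.
  by rewrite inner_unit_vec.
by apply: sum_le => i _; apply: bessel.
Qed.

Lemma orthonormal_extend S k E r : subspace S -> @orthonormal k E -> (forall j, S (E j)) ->
  S r -> (forall j, inner (E j) r = 0) -> 0 < inner r r ->
  exists E', @orthonormal k.+1 E' /\ forall j, S (E' j).
Proof.
move=> [_ [_ Sscale]] HE SE Sr Er r0.
have nr := vnorm_sq r; have nr0 : 0 < vnorm r by have := vnorm_ge0 r; nra.
pose e := vscale (/ vnorm r) r.
have ee : inner e e = 1 by rewrite /e inner_scalel inner_scaler -nr; field; lra.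
have Ee j : inner (E j) e = 0 by rewrite /e inner_scaler Er; ring.
exists (fun i => if unlift ord0 i is Some j then E j else e); split.
  move=> i j; case: (unliftP ord0 i) => [a ->|->]; case: (unliftP ord0 j) => [b ->|->].
  - by rewrite (inj_eq lift_inj) HE.
  - by rewrite eq_sym (negbTE (neq_lift _ _)) Ee.
  - by rewrite (negbTE (neq_lift _ _)) inner_sym Ee.
  - by rewrite eqxx ee.
by move=> i; case: (unliftP ord0 i) => [a _|_] //; apply: Sscale.
Qed.

(* A maximal orthonormal family in [S] exists since [k <= n], and it spans [S]. *)
Lemma onb_exists S : subspace S -> exists k (E : 'I_k -> vec n),
  orthonormal k E /\ (forall j, S (E j)) /\ (forall s, S s -> s = coord_proj E s).
Proof.
move=> HS; have [S0 [Sadd Sscale]] := HS.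
pose P k := exists E : 'I_k -> vec n, orthonormal k E /\ forall j, S (E j).
have [k [[E [HE SE]] Hk]] : exists k, P k /\ ~ P k.+1.
  apply: NNPP => H.
  have Pk k : P k.
    elim: k => [|k IH]; first by exists (fun _ => @vzero n); split; case.
    by apply: NNPP => Hk; apply: H; exists k.
  by have [E [HE _]] := Pk n.+1; have := orthonormal_card_le _ _ HE; rewrite ltnn.
exists k, E; do 2 split => //.
move=> s Ss; set r := vsub s (coord_proj E s).
have Sr : S r.
  have -> : r = vadd s (vscale (-1) (coord_proj E s)) by rewrite /r; vext.
  by apply: Sadd => //; apply: Sscale; apply: subspace_lin_comb.
have Er j : inner (E j) r = 0 by rewrite /r inner_subr inner_coord_proj // inner_sym; ring.
have r0 : inner r r = 0.
  have := inner_ge0 r; case/Rle_lt_or_eq_dec => // r0.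
  by case: Hk; apply: (orthonormal_extend _ _ _ _ HS HE SE Sr Er r0).
apply: functional_extensionality => l.
by have := f_equal (fun f => f l) (inner_eq0 _ r0); rewrite /r /vsub /vzero; lra.
Qed.

Lemma orth_proj_exists L u : subspace L ->
  exists g, L g /\ forall l, L l -> inner (vsub u g) l = 0.
Proof.
move=> HL; have [k [E [HE [LE Lspan]]]] := onb_exists _ HL.
exists (coord_proj E u); split; first exact: subspace_lin_comb.
move=> l Ll; rewrite inner_sym (Lspan l Ll) inner_lin_combl big1 // => j _.
by rewrite inner_subr inner_coord_proj // (inner_sym u); ring.
Qed.
End OrthonormalBases.

Section SubspaceSum.
Context {n : nat}.
Implicit Types (U V : vec n -> Prop).

Definition subspace_sum U V : vec n -> Prop :=
  fun l => exists p q, U p /\ V q /\ l = vadd p q.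

Lemma subspace_sum_subspace U V : subspace U -> subspace V -> subspace (subspace_sum U V).
Proof.
move=> [U0 [Uadd Uscale]] [V0 [Vadd Vscale]]; split; [|split].
- by exists (@vzero n), (@vzero n); do 2 split => //; vext.
- move=> _ _ [p1 [q1 [Up1 [Vq1 ->]]]] [p2 [q2 [Up2 [Vq2 ->]]]].
  by exists (vadd p1 p2), (vadd q1 q2); split; [exact: Uadd | split; [exact: Vadd | vext]].
- move=> c _ [p [q [Up [Vq ->]]]].
  by exists (vscale c p), (vscale c q); split; [exact: Uscale | split; [exact: Vscale | vext]].
Qed.

(* Expand [l] in an orthonormal basis of [U + V] and split each basis vector once and for all. *)
Lemma subspace_sum_bounded_decomp U V : subspace U -> subspace V ->
  exists K, 0 <= K /\ forall l, subspace_sum U V l -> exists p q,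
    U p /\ V q /\ l = vadd p q /\ vnorm p <= K * vnorm l /\ vnorm q <= K * vnorm l.
Proof.
move=> HU HV; have [k [E [HE [LE Lspan]]]] := onb_exists _ (subspace_sum_subspace _ _ HU HV).
have split_E j : {pq : vec n * vec n | U pq.1 /\ V pq.2 /\ E j = vadd pq.1 pq.2}.
  by apply: constructive_indefinite_description; have [p [q [? [? ?]]]] := LE j; exists (p, q).
pose P j := (proj1_sig (split_E j)).1; pose Q j := (proj1_sig (split_E j)).2.
have [UP [VQ EPQ]] : (forall j, U (P j)) /\ (forall j, V (Q j)) /\
    (forall j, E j = vadd (P j) (Q j)).
  by split; [|split] => j; have [? [? ?]] := proj2_sig (split_E j).
have sum_ge0_norm (F : 'I_k -> vec n) : 0 <= \big[Rplus/0]_(j < k) vnorm (F j).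
  by apply: sum_ge0 => j _; apply: vnorm_ge0.
exists (\big[Rplus/0]_(j < k) vnorm (P j) + \big[Rplus/0]_(j < k) vnorm (Q j)).
split; first by have := sum_ge0_norm P; have := sum_ge0_norm Q; lra.
move=> l Ll; set c := fun j => inner l (E j).
have c_le j : Rabs (c j) <= vnorm l.
  have := cauchy_schwarz_abs l (E j).
  by rewrite /vnorm (HE j j) eqxx sqrt_1 Rmult_1_r.
exists (lin_comb c P), (lin_comb c Q).
split; first exact: subspace_lin_comb.
split; first exact: subspace_lin_comb.
split; last first.
  have := vnorm_lin_comb_le _ _ P _ c_le; have := vnorm_lin_comb_le _ _ Q _ c_le.
  by have := sum_ge0_norm P; have := sum_ge0_norm Q; have := vnorm_ge0 l; split; nra.
rewrite {1}(Lspan l Ll); apply: functional_extensionality => i.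
rewrite /coord_proj /lin_comb /vadd sumD; apply: eq_bigr => j _.
by rewrite /c; have := f_equal (fun f => f i) (EPQ j); rewrite /vadd => ->; ring.
Qed.
End SubspaceSum.

Section Directions.
Context {n : nat}.
Implicit Types (x y z s : vec n) (C : vec n -> Prop).

Definition direction C z : vec n -> Prop := fun s => aff C (vadd z s).

Lemma aff_affine C : affine_set (aff C).
Proof. by move=> x y t Hx Hy S0 HS HC; apply: (HS); [apply: Hx S0 HS HC | apply: Hy S0 HS HC]. Qed.

Lemma aff_mem C y : C y -> aff C y.
Proof. by move=> Cy S0 _ HC; apply: HC. Qed.

Lemma direction_subspace C z : C z -> subspace (direction C z).
Proof.
move=> Cz; have Az := aff_mem _ _ Cz; have Haf := @aff_affine C.
rewrite /subspace /direction; split; [|split].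
- by have -> : vadd z (@vzero n) = z by vext.
- move=> s t Hs Ht; have := Haf _ _ 2 (Haf _ _ (1/2) Hs Ht) Az.
  by have -> : vadd (vscale 2 (vadd (vscale (1 / 2) (vadd z s)) (vscale (1 - 1 / 2) (vadd z t))))
      (vscale (1 - 2) z) = vadd z (vadd s t) by vext.
- move=> c s Hs; have := Haf _ _ c Hs Az.
  by have -> : vadd (vscale c (vadd z s)) (vscale (1 - c) z) = vadd z (vscale c s) by vext.
Qed.

Lemma direction_sub C z y c : C z -> C y -> C c -> direction C z (vsub y c).
Proof.
move=> Cz Cy Cc; have [_ [Dadd Dscale]] := direction_subspace _ _ Cz.
have Dmem w : C w -> direction C z (vsub w z).
  move=> Cw; rewrite /direction; have -> : vadd z (vsub w z) = w by vext.
  exact: aff_mem.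
have -> : vsub y c = vadd (vsub y z) (vscale (-1) (vsub c z)) by vext.
by apply: Dadd; [apply: Dmem | apply: Dscale; apply: Dmem].
Qed.

Lemma ri_ball C z : ri C z ->
  exists e, 0 < e /\ forall s, direction C z s -> vnorm s <= e -> C (vadd z s).
Proof.
move=> [_ [eps [eps0 Hball]]]; exists (eps / 2); split; first lra.
move=> s Ds ns; apply: Hball => //.
have -> : vsub (vadd z s) z = s by vext.
lra.
Qed.
End Directions.

(* Rescale [s] to length [e]: then [z + s] lies in [C], and [w] is normal to [C] at [a]. *)
Lemma normal_direction_bound {n} {C W : vec n -> Prop} {z a w : vec n} {e : R} :
  0 < e -> subspace W -> (forall s, W s -> vnorm s <= e -> C (vadd z s)) ->
  normal C a w -> forall s, W s -> e * inner w s <= vnorm s * inner w (vsub a z).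
Proof.
move=> e0 [_ [_ Wscale]] ball Hn s Ws.
have [s0|s_pos] := Req_dec (vnorm s) 0.
  by rewrite (vnorm_eq0 _ s0) inner_zeror vnorm_zero; lra.
have ns : 0 < vnorm s by have := vnorm_ge0 s; lra.
set t := e / vnorm s.
have nts : vnorm (vscale t s) = e.
  by rewrite vnorm_scale Rabs_pos_eq /t; [field | apply: Rlt_le; apply: Rdiv_lt_0_compat].
have := Hn _ (ball _ (Wscale t s Ws) (Req_le _ _ nts)).
have -> : vsub (vadd z (vscale t s)) a = vsub (vscale t s) (vsub a z) by vext.
rewrite inner_subr inner_scaler => H.
have -> : e * inner w s = vnorm s * (t * inner w s) by rewrite /t; field; lra.
by apply: Rmult_le_compat_l; lra.
Qed.

Section DouglasRachford.
Context {n : nat}.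
Variables (A B : vec n -> Prop).
Hypotheses (Acl : closedS A) (Bcl : closedS B) (Acv : convexS A) (Bcv : convexS B).

Lemma DR_residual x : vsub x (DR A B x) = vsub (proj A x) (proj B (refl A x)).
Proof. by rewrite /DR; vext. Qed.

Lemma DR_fixed_point c w : A c -> B c -> normal A c w -> normal B c (vscale (-1) w) ->
  Fix (DR A B) (vadd c w).
Proof.
move=> Ac Bc nA nB.
have PA : proj A (vadd c w) = c.
  by apply: proj_eq_normal => //; have -> : vsub (vadd c w) c = w by vext.
have PB : proj B (refl A (vadd c w)) = c.
  apply: proj_eq_normal => //; rewrite /refl PA.
  by have -> : vsub (vsub (vscale 2 c) (vadd c w)) c = vscale (-1) w by vext.
by rewrite /Fix /DR PA PB; vext.
Qed.

Variables (z : vec n) (e K : R).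
Hypotheses (Az : A z) (Bz : B z) (e0 : 0 < e) (K0 : 0 <= K).
Let U := direction A z.
Let V := direction B z.
Let L := subspace_sum U V.
Hypotheses (ballA : forall s, U s -> vnorm s <= e -> A (vadd z s))
  (ballB : forall s, V s -> vnorm s <= e -> B (vadd z s))
  (decomp : forall l, L l -> exists p q, U p /\ V q /\ l = vadd p q /\
     vnorm p <= K * vnorm l /\ vnorm q <= K * vnorm l).

Let sU : subspace U := direction_subspace _ _ Az.
Let sV : subspace V := direction_subspace _ _ Bz.

(* If [a - b = P + Q] then [a - P = b + Q]; pulling it towards [z] lands in both sets,
   because [z - P / lam] is in [A] and [z + Q / lam] is in [B] for [lam = N / e]. *)
Lemma common_point_near a b P Q N : A a -> B b -> U P -> V Q -> vsub a b = vadd P Q ->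
  vnorm P <= N -> vnorm Q <= N ->
  exists c, A c /\ B c /\ vnorm (vsub c a) <= N * (1 + vnorm (vsub a z) / e).
Proof.
move=> Aa Bb UP VQ abPQ nP nQ.
have [_ [_ Uscale]] := sU; have [_ [_ Vscale]] := sV.
have az0 := vnorm_ge0 (vsub a z); have ie0 : 0 < / e by apply: Rinv_0_lt_compat.
have [N0|N_pos] := Req_dec N 0.
  have P0 : P = @vzero n by apply: vnorm_eq0; have := vnorm_ge0 P; lra.
  have Q0 : Q = @vzero n by apply: vnorm_eq0; have := vnorm_ge0 Q; lra.
  have ab : b = a.
    apply: functional_extensionality => i.
    by have := f_equal (fun f => f i) abPQ; rewrite P0 Q0 /vsub /vadd /vzero; lra.
  exists a; split => //; split; first by rewrite -ab.
  have -> : vsub a a = @vzero n by vext.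
  by rewrite vnorm_zero N0; lra.
have N0 : 0 < N by have := vnorm_ge0 P; lra.
set lam := N / e; have lam0 : 0 < lam by apply: Rdiv_lt_0_compat.
have small t (s : vec n) : Rabs t = / lam -> vnorm s <= N -> vnorm (vscale t s) <= e.
  move=> ht ns; rewrite vnorm_scale ht /lam Rinv_div.
  have eN : 0 <= e / N by apply: Rlt_le; apply: Rdiv_lt_0_compat.
  have := Rmult_le_compat_l _ _ _ eN ns.
  by rewrite (_ : e / N * N = e) //; field; lra.
set mu := / (1 + lam).
have mu1 : mu * (1 + lam) = 1 by rewrite /mu; field; lra.
have mu0 : 0 < mu by rewrite /mu; apply: Rinv_0_lt_compat; lra.
exists (vadd (vscale mu (vsub a P)) (vscale (1 - mu) z)); split; [|split].
- have AzP := ballA _ (Uscale _ _ UP) (small (- / lam) P ltac:(rewrite Rabs_Ropp Rabs_pos_eq;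
    [done | apply: Rlt_le; apply: Rinv_0_lt_compat; lra]) nP).
  have := Acv _ _ (1 - mu) AzP Aa ltac:(nra).
  have -> : vadd (vscale (1 - mu) (vadd z (vscale (- / lam) P))) (vscale (1 - (1 - mu)) a)
    = vadd (vscale mu (vsub a P)) (vscale (1 - mu) z); last done.
  apply: functional_extensionality => i; rewrite /vadd /vsub /vscale /mu.
  field; lra.
- have BzQ := ballB _ (Vscale _ _ VQ) (small (/ lam) Q ltac:(rewrite Rabs_pos_eq;
    [done | apply: Rlt_le; apply: Rinv_0_lt_compat; lra]) nQ).
  have := Bcv _ _ (1 - mu) BzQ Bb ltac:(nra).
  have -> : vadd (vscale (1 - mu) (vadd z (vscale (/ lam) Q))) (vscale (1 - (1 - mu)) b)
    = vadd (vscale mu (vsub a P)) (vscale (1 - mu) z); last done.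
  apply: functional_extensionality => i.
  have := f_equal (fun f => f i) abPQ; rewrite /vadd /vsub /vscale /mu => abi.
  have -> : a i = b i + P i + Q i by lra.
  field; lra.
- have -> : vsub (vadd (vscale mu (vsub a P)) (vscale (1 - mu) z)) a
    = vadd (vscale (- mu) P) (vscale (1 - mu) (vsub z a)) by vext.
  apply: Rle_trans (vnorm_add _ _) _.
  have mu_le1 : mu <= 1 by nra.
  rewrite !vnorm_scale (vnorm_sym z a) Rabs_Ropp !Rabs_pos_eq; try lra.
  have -> : 1 - mu = N / e * mu by rewrite -/lam; nra.
  have := vnorm_ge0 P; rewrite /Rdiv => P0.
  have : mu * vnorm P <= N by nra.
  have : mu * vnorm (vsub a z) <= vnorm (vsub a z) by nra.
  have := Rmult_le_pos _ _ (Rlt_le _ _ N0) (Rlt_le _ _ ie0).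
  nra.
Qed.

(* Split [g = p + q] along [U + V]; the normal cones of [A] at [a] and of [B] at [b]
   control [<u, p>] and [<u, q>], and [|g|^2 = <u, g>]. *)
Lemma orth_part_bound a b u g : normal A a u -> normal B b (vsub (vsub a b) u) ->
  L g -> (forall l, L l -> inner (vsub u g) l = 0) ->
  vnorm g <= K * (1 + (vnorm u + vnorm (vsub b z)) / e) * vnorm (vsub a b).
Proof.
move=> nA nB Lg perp; set d := vsub a b in nB *.
have [_ [_ Vscale]] := sV.
have [p [q [Up [Vq [gpq [np nq]]]]]] := decomp _ Lg.
have hp := normal_direction_bound e0 sU ballA nA _ Up.
have hq := normal_direction_bound e0 sV ballB nB _ (Vscale (-1) q Vq).
rewrite vnorm_opp inner_scaler in hq.
have uaz := normal_inner_ge0 _ _ _ _ nA Az.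
have dbz := normal_inner_ge0 _ _ _ _ nB Bz.
have gg : inner g g = inner u g by have := perp g Lg; rewrite inner_subl; lra.
have ug : inner u g = inner u p + inner d q - inner (vsub d u) q by rewrite gpq; inner_ring.
have dq := cauchy_schwarz d q.
have normals : inner u (vsub a z) + inner (vsub d u) (vsub b z)
    <= vnorm d * (vnorm u + vnorm (vsub b z)).
  have -> : inner u (vsub a z) + inner (vsub d u) (vsub b z)
    = inner u d + inner d (vsub b z) by rewrite /d; inner_ring.
  by have := cauchy_schwarz u d; have := cauchy_schwarz d (vsub b z); rewrite (inner_sym u); lra.
set G := vnorm g in np nq *; set D := vnorm d in dq normals *.
set S := vnorm u + vnorm (vsub b z) in normals *.
have G0 : 0 <= G := vnorm_ge0 g; have D0 : 0 <= D := vnorm_ge0 d.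
have S0 : 0 <= S by have := vnorm_ge0 u; have := vnorm_ge0 (vsub b z); rewrite /S; lra.
have key : e * (G * G) <= K * G * (D * (S + e)).
  rewrite /G vnorm_sq gg ug -/G.
  have := Rmult_le_compat_r _ _ _ uaz np; have := Rmult_le_compat_r _ _ _ dbz nq.
  have := Rmult_le_compat_l _ _ _ (Rmult_le_pos _ _ (Rlt_le _ _ e0) D0) nq.
  have := Rmult_le_compat_l _ _ _ (Rmult_le_pos _ _ K0 G0) normals.
  nra.
have -> : K * (1 + S / e) * D = K * D * (S + e) / e by field; lra.
apply: (Rmult_le_reg_l e) => //; rewrite (_ : e * (K * D * (S + e) / e) = K * D * (S + e));
  last by field; lra.
have [G_0|G_pos] := Req_dec G 0; first by rewrite G_0; have := Rmult_le_pos _ _ K0 D0; nra.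
apply: (Rmult_le_reg_r G); first lra.
nra.
Qed.

Lemma vsub_A_in_L y c : A y -> A c -> L (vsub y c).
Proof.
move=> Ay Ac; have [V0 _] := sV; exists (vsub y c), (@vzero n).
by split; [apply: direction_sub | split => //; vext].
Qed.

Lemma vsub_B_in_L y c : B y -> B c -> L (vsub y c).
Proof.
move=> By Bc; have [U0 _] := sU; exists (@vzero n), (vsub y c).
by split => //; split; [apply: direction_sub | vext].
Qed.

Lemma dist_Fix_DR_le x : dist_to (Fix (DR A B)) x <=
  2 * K * (1 + 2 * vnorm (vsub x z) / e) * vnorm (vsub x (DR A B x)).
Proof.
have [a Ha] := proj_exists _ x Acl Acv (ex_intro _ z Az).
have [b Hb] := proj_exists _ (refl A x) Bcl Bcv (ex_intro _ z Bz).
rewrite DR_residual (proj_eq _ _ _ Acv Ha) (proj_eq _ _ _ Bcv Hb).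
move: Hb; rewrite /refl (proj_eq _ _ _ Acv Ha) => Hb.
set u := vsub x a; set d := vsub a b; set M := vnorm (vsub x z).
have nA : normal A a u := is_proj_normal _ _ _ Acv Ha.
have nB : normal B b (vsub d u).
  have := is_proj_normal _ _ _ Bcv Hb.
  by have -> : vsub (vsub (vscale 2 a) x) b = vsub d u by rewrite /d /u; vext.
have u_le : vnorm u <= M := proj2 Ha z Az.
have az_le : vnorm (vsub a z) <= M := is_proj_dist_le _ _ _ _ Acv Ha Az.
have bz_le : vnorm (vsub b z) <= 2 * M.
  apply: Rle_trans (is_proj_dist_le _ _ _ _ Bcv Hb Bz) _.
  have -> : vsub (vsub (vscale 2 a) x) z = vsub (vsub a z) u by rewrite /u; vext.
  by have := vnorm_sub (vsub a z) u; lra.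
have [Aa Bb] := (proj1 Ha, proj1 Hb).
have dL : L d.
  exists (vsub a z), (vsub z b); split; first exact: direction_sub _ _ _ _ Az Aa Az.
  by split; [exact: direction_sub _ _ _ _ Bz Bz Bb | rewrite /d; vext].
have [P [Q [UP [VQ [dPQ [nP nQ]]]]]] := decomp _ dL.
have [c [Ac [Bc c_le]]] := common_point_near _ _ _ _ _ Aa Bb UP VQ dPQ nP nQ.
have [g [Lg perp]] := orth_proj_exists L u (subspace_sum_subspace _ _ sU sV).
have g_le := orth_part_bound _ _ _ _ nA nB Lg perp.
have [nAc _] := orth_normal A c (vsub u g) (fun y Ay => perp _ (vsub_A_in_L _ _ Ay Ac)).
have [_ nBc] := orth_normal B c (vsub u g) (fun y By => perp _ (vsub_B_in_L _ _ By Bc)).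
apply: Rle_trans (dist_to_le _ _ _ (DR_fixed_point _ _ Ac Bc nAc nBc)) _.
have -> : vsub x (vadd c (vsub u g)) = vadd (vsub a c) g by rewrite /u; vext.
apply: Rle_trans (vnorm_add _ _) _; rewrite vnorm_sym.
move: c_le g_le; rewrite /Rdiv; set ie := / e; set D := vnorm d.
have ie0 : 0 < ie by apply: Rinv_0_lt_compat.
have KD : 0 <= K * D by apply: Rmult_le_pos => //; apply: vnorm_ge0.
have h1 : vnorm (vsub a z) * ie <= M * ie by apply: Rmult_le_compat_r; lra.
have h2 : (vnorm u + vnorm (vsub b z)) * ie <= 3 * M * ie by apply: Rmult_le_compat_r; lra.
have := Rmult_le_compat_l _ _ _ KD h1; have := Rmult_le_compat_l _ _ _ KD h2.
nra.
Qed.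
End DouglasRachford.

Theorem theorem4p5 (n : nat) (A B : vec n -> Prop)
  (hAne : exists a, A a) (hBne : exists b, B b)
  (hAcl : closedS A) (hBcl : closedS B)
  (hAcv : convexS A) (hBcv : convexS B)
  (hri : exists z, ri A z /\ ri B z) :
  forall rho : R, 0 < rho ->
    exists kappa : R, 0 <= kappa /\
      forall x : vec n, vnorm x <= rho ->
        dist_to (Fix (DR A B)) x <= kappa * vnorm (vsub x (DR A B x)).
Proof.
move=> rho rho0; have [z [riA riB]] := hri.
have [eA [eA0 ballA]] := ri_ball _ _ riA; have [eB [eB0 ballB]] := ri_ball _ _ riB.
set e := Rmin eA eB; have e0 : 0 < e by apply: Rmin_glb_lt.
have ballA' s : direction A z s -> vnorm s <= e -> A (vadd z s).
  by move=> Us se; apply: ballA Us _; have := Rmin_l eA eB; rewrite -/e; lra.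
have ballB' s : direction B z s -> vnorm s <= e -> B (vadd z s).
  by move=> Vs se; apply: ballB Vs _; have := Rmin_r eA eB; rewrite -/e; lra.
have [Az Bz] := (proj1 riA, proj1 riB).
have [K [K0 decomp]] := subspace_sum_bounded_decomp _ _
  (direction_subspace _ _ Az) (direction_subspace _ _ Bz).
have M_le x : vnorm x <= rho -> vnorm (vsub x z) <= rho + vnorm z.
  by have := vnorm_sub x z; lra.
have ie0 : 0 < / e by apply: Rinv_0_lt_compat.
exists (2 * K * (1 + 2 * (rho + vnorm z) / e)); split.
  by have := vnorm_ge0 z; rewrite /Rdiv; have := Rmult_le_pos (rho + vnorm z) (/ e); nra.
move=> x /M_le xz.
apply: Rle_trans
  (@dist_Fix_DR_le _ A B hAcl hBcl hAcv hBcv z e K Az Bz e0 K0 ballA' ballB' decomp x) _.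
apply: Rmult_le_compat_r; first exact: vnorm_ge0.
apply: Rmult_le_compat_l; first lra.
by rewrite /Rdiv; have := Rmult_le_compat_r _ _ _ (Rlt_le _ _ ie0) xz; lra.
Qed.
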